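(* For every formula $\delta\in\mathcal{L}(\Rightarrow)$: (1) $\delta^\dagger\in\mathcal{L}$; and (2) for every model $\mathcal{M}=\langle W,V\rangle$, every $w\in W$ and every $X\subseteq W$, $\mathcal{M},w,X\vDash\delta$ if and only if $\mathcal{M},w,X\vDash\delta^\dagger$, where $\vDash$ is the Kolodny–MacFarlane semantics.
   Context: $\mathcal{L}(\Rightarrow)$: $\varphi::= p\mid \neg\varphi\mid (\varphi\wedge\varphi)\mid \Box\varphi \mid (\varphi\Rightarrow\varphi)$ over a fixed set of propositional variables; $\vee,\to,\bot$ as usual, $\Diamond\varphi:=\neg\Box\neg\varphi$; $\mathcal{L}$ is the $\Rightarrow$-free fragment; nonmodal formulas are those of $\mathcal{L}$ without $\Box$. Models $\mathcal{M}=\langle W,V\rangle$: $W$ nonempty, $V(p)\subseteq W$. Kolodny–MacFarlane semantics at $\mathcal{M},w,X$ ($w\in W$, $X\subseteq W$): $p$ true iff $w\in V(p)$; $\neg,\wedge$ Boolean; $\Box\varphi$ true iff $\varphi$ is true at $\mathcal{M},v,X$ for all $v\in X$; $\varphi\Rightarrow\psi$ true iff $\mathcal{M},w,X'\vDash\Box\psi$ for every $X'$ with (i) $X'\subseteq X$, (ii) $X'\subseteq\llbracket\varphi\rrbracket^{\mathcal{M},X'}$, (iii) no $X''$ satisfying (i),(ii) has $X'\subsetneq X''$; here $\llbracket\varphi\rrbracket^{\mathcal{M},Y}=\{v\in Y\mid \mathcal{M},v,Y\vDash\varphi\}$. Every $\chi\in\mathcal{L}$ is provably equivalent in the modal logic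 K45 to a formula in disjunctive normal form $\bigvee_{i}(\pi^i\wedge\Box\beta^i\wedge\Diamond\beta^i_1\wedge\dots\wedge\Diamond\beta^i_{m_i})$ with all $\pi^i,\beta^i,\beta^i_j$ nonmodal; $\chi^{NF}$ denotes a fixed such formula for $\chi$. The map $(\cdot)^*$: given $\lambda=\Theta\Rightarrow\Omega$ with $\Theta=\bigvee_{i\in I}\theta_i$, $\Omega=\bigvee_{j\in J}\omega_j$ ($I,J$ finite), $\theta_i=\varphi_i\wedge\Box\psi_i\wedge\bigwedge_{n\in D_i}\Diamond\chi_n$, $\omega_j=\alpha_j\wedge\Box\beta_j\wedge\bigwedge_{m\in E_j}\Diamond\gamma_m$, all of $\varphi_i,\psi_i,\chi_n,\alpha_j,\beta_j,\gamma_m$ nonmodal, define for $K\subseteq I$: $\mathtt{info}_K:=(\bigvee_{k\in K}\varphi_k)\wedge\bigwedge_{k\in K}\psi_k$; $\mathtt{good}_K:=\bigwedge_{k\in K}\bigwedge_{n\in D_k}\Diamond(\mathtt{info}_K\wedge\chi_n)$; $\mathtt{max}_K:=\mathtt{good}_K\wedge\bigwedge_{L\subseteq I}\big((\Box(\mathtt{info}_K\to\mathtt{info}_L)\wedge\Diamond(\neg\mathtt{info}_K\wedge\mathtt{info}_L))\to\neg\mathtt{good}_L\big)$; for $S\subseteq J$: $\mathtt{state}_S:=\bigwedge_{s\in S}\alpha_s\wedge\bigwedge_{s\in J\setminus S}\neg\alpha_s$; and $\lambda^*:=\bigwedge_{K\subseteq I}\Big(\mathtt{max}_K\to\Box\big(\mathtt{info}_K\to\bigwedge_{S\subseteq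 J}(\mathtt{state}_S\to\bigvee_{s\in S}(\Box(\mathtt{info}_K\to\beta_s)\wedge\bigwedge_{m\in E_s}\Diamond(\mathtt{info}_K\wedge\gamma_m)))\big)\Big)$ (empty disjunction is $\bot$, empty conjunction is $\top$). The translation $(\cdot)^\dagger$: $p^\dagger=p$; $(\neg\varphi)^\dagger=\neg\varphi^\dagger$; $(\varphi\wedge\psi)^\dagger=\varphi^\dagger\wedge\psi^\dagger$; $(\Box\varphi)^\dagger=\Box\varphi^\dagger$; $(\varphi\Rightarrow\psi)^\dagger=\big((\varphi^\dagger)^{NF}\Rightarrow(\psi^\dagger)^{NF}\big)^*$. *)

From Stdlib Require Import List Bool.
Import ListNotations.

Inductive formula : Type :=
| FVar : nat -> formula
| FNeg : formula -> formula
| FAnd : formula -> formula -> formula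
| FBox : formula -> formula
| FImp : formula -> formula -> formula.

Definition FBot : formula := FAnd (FVar 0) (FNeg (FVar 0)).
Definition FTop : formula := FNeg FBot.
Definition FOr (a b : formula) : formula := FNeg (FAnd (FNeg a) (FNeg b)).
Definition FTo (a b : formula) : formula := FNeg (FAnd a (FNeg b)).
Definition FIff (a b : formula) : formula := FAnd (FTo a b) (FTo b a).
Definition FDia (a : formula) : formula := FNeg (FBox (FNeg a)).

Definition bigOr (l : list formula) : formula := fold_right FOr FBot l.
Definition bigAnd (l : list formula) : formula := fold_right FAnd FTop l.

(* Membership in L (=>-free) and nonmodal formulas. *)
Fixpoint imp_free (f : formula) : Prop :=
  match f with
  | FVar _ => True
  | FNeg a => imp_free a
  | FAnd a b => imp_free a /\ imp_free b
  | FBox a => imp_free a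
  | FImp _ _ => False
  end.

Fixpoint nonmodal (f : formula) : Prop :=
  match f with
  | FVar _ => True
  | FNeg a => nonmodal a
  | FAnd a b => nonmodal a /\ nonmodal b
  | FBox _ => False
  | FImp _ _ => False
  end.

Definition subset {W : Type} (A B : W -> Prop) : Prop := forall v, A v -> B v.

Fixpoint sat {W : Type} (V : nat -> W -> Prop) (f : formula) (w : W) (X : W -> Prop)
  : Prop :=
  match f with
  | FVar p => V p w
  | FNeg a => ~ sat V a w X
  | FAnd a b => sat V a w X /\ sat V b w X
  | FBox a => forall v, X v -> sat V a v X
  | FImp a b =>
      forall X' : W -> Prop,
        subset X' X ->
        (forall v, X' v -> sat V a v X') ->
        ~ (exists X'' : W -> Prop,
              subset X'' X /\ (forall v, X'' v -> sat V a v X'') /\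
              subset X' X'' /\ (exists v, X'' v /\ ~ X' v)) ->
        forall v, X' v -> sat V b v X'
  end.

Fixpoint peval (val : formula -> bool) (f : formula) : bool :=
  match f with
  | FNeg a => negb (peval val a)
  | FAnd a b => peval val a && peval val b
  | _ => val f     (* variables and boxed formulas are propositional atoms *)
  end.

Definition tautology (f : formula) : Prop := forall val, peval val f = true.

Inductive K45prov : formula -> Prop :=
| K45_taut f : imp_free f -> tautology f -> K45prov f
| K45_K a b : imp_free a -> imp_free b ->
    K45prov (FTo (FBox (FTo a b)) (FTo (FBox a) (FBox b)))
| K45_4 a : imp_free a -> K45prov (FTo (FBox a) (FBox (FBox a)))
| K45_5 a : imp_free a -> K45prov (FTo (FNeg (FBox a)) (FBox (FNeg (FBox a))))
| K45_MP a b : K45prov (FTo a b) -> K45prov a -> K45prov b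
| K45_Nec a : K45prov a -> K45prov (FBox a).

(* Disjunctive normal forms: a list of disjuncts (pi, beta, [beta_1;...;beta_m])
   standing for  pi /\ Box beta /\ Dia beta_1 /\ ... /\ Dia beta_m. *)
Definition disjunct : Type := (formula * formula * list formula)%type.
Definition dnf : Type := list disjunct.

Definition disjunct_formula (d : disjunct) : formula :=
  match d with (p, b, ds) => FAnd p (FAnd (FBox b) (bigAnd (map FDia ds))) end.
Definition dnf_formula (n : dnf) : formula := bigOr (map disjunct_formula n).

Definition dnf_ok (n : dnf) : Prop :=
  Forall (fun d => match d with (p, b, ds) =>
            nonmodal p /\ nonmodal b /\ Forall nonmodal ds end) n.

Definition NF_spec (NF : formula -> dnf) : Prop :=
  forall chi, imp_free chi ->
    dnf_ok (NF chi) /\ K45prov (FIff chi (dnf_formula (NF chi))).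

Fixpoint powerset {A : Type} (l : list A) : list (list A) :=
  match l with
  | [] => [[]]
  | x :: t => let p := powerset t in map (cons x) p ++ p
  end.

Fixpoint powerset2 {A : Type} (l : list A) : list (list A * list A) :=
  match l with
  | [] => [([], [])]
  | x :: t => let p := powerset2 t in
      map (fun sc => (x :: fst sc, snd sc)) p ++ map (fun sc => (fst sc, x :: snd sc)) p
  end.

Definition d_pi (d : disjunct) : formula := match d with (p, _, _) => p end.
Definition d_beta (d : disjunct) : formula := match d with (_, b, _) => b end.
Definition d_dias (d : disjunct) : list formula := match d with (_, _, ds) => ds end.

Definition info (K : dnf) : formula :=
  FAnd (bigOr (map d_pi K)) (bigAnd (map d_beta K)).

Definition good (K : dnf) : formula :=
  bigAnd (flat_map (fun k => map (fun chi => FDia (FAnd (info K) chi)) (d_dias k)) K).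

Definition maxK (Theta K : dnf) : formula :=
  FAnd (good K)
    (bigAnd (map (fun L =>
       FTo (FAnd (FBox (FTo (info K) (info L))) (FDia (FAnd (FNeg (info K)) (info L))))
           (FNeg (good L))) (powerset Theta))).

Definition state (SC : dnf * dnf) : formula :=
  FAnd (bigAnd (map d_pi (fst SC))) (bigAnd (map (fun s => FNeg (d_pi s)) (snd SC))).

Definition star (Theta Omega : dnf) : formula :=
  bigAnd (map (fun K =>
    FTo (maxK Theta K)
      (FBox (FTo (info K)
        (bigAnd (map (fun SC =>
           FTo (state SC)
             (bigOr (map (fun s =>
                FAnd (FBox (FTo (info K) (d_beta s)))
                     (bigAnd (map (fun g => FDia (FAnd (info K) g)) (d_dias s))))
                (fst SC))))
           (powerset2 Omega))))))
    (powerset Theta)).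

Fixpoint dagger (NF : formula -> dnf) (f : formula) : formula :=
  match f with
  | FVar p => FVar p
  | FNeg a => FNeg (dagger NF a)
  | FAnd a b => FAnd (dagger NF a) (dagger NF b)
  | FBox a => FBox (dagger NF a)
  | FImp a b => star (NF (dagger NF a)) (NF (dagger NF b))
  end.

(* Nonmodal formulas do not depend on the information state, and by K45
   soundness the antecedent and consequent may be replaced by their normal
   forms Θ and Ω.  If X' ⊆ X accepts Θ (X' ⊆ ⟦Θ⟧^X') and K is the set of
   disjuncts whose modal part holds on X', then X' ⊆ X ∩ ⟦info_K⟧, and this
   larger state accepts Θ again because good_K holds at X.  So the maximal
   Θ-accepting subsets of X are exactly the states X ∩ ⟦info_K⟧ for which
   max_K holds at X.  On such a state Ω is accepted iff, at every world of it,
   some disjunct of Ω whose π is true there has its box and diamonds satisfied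
   relative to info_K; casing on which π's are true (state_S) is how λ* says
   this at X. *)

From Stdlib Require Import List Bool Classical ClassicalEpsilon.
Import ListNotations.

Section Semantics.

Context {W : Type} (V : nat -> W -> Prop).

Lemma sat_FTop w X : sat V FTop w X.
Proof. unfold FTop, FBot; simpl; tauto. Qed.

Lemma sat_FAnd a b w X : sat V (FAnd a b) w X <-> sat V a w X /\ sat V b w X.
Proof. reflexivity. Qed.

Lemma sat_FOr a b w X : sat V (FOr a b) w X <-> sat V a w X \/ sat V b w X.
Proof. unfold FOr; simpl; destruct (classic (sat V a w X)); tauto. Qed.

Lemma sat_FTo a b w X : sat V (FTo a b) w X <-> (sat V a w X -> sat V b w X).
Proof. unfold FTo; simpl; destruct (classic (sat V b w X)); tauto. Qed.

Lemma sat_FIff a b w X : sat V (FIff a b) w X <-> (sat V a w X <-> sat V b w X).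
Proof.
  unfold FIff; split; [intros [Hab Hba] | intros H; split]; rewrite ?sat_FTo in *; tauto.
Qed.

Lemma sat_FDia a w X : sat V (FDia a) w X <-> exists v, X v /\ sat V a v X.
Proof.
  unfold FDia; simpl; split.
  - intros H; apply NNPP; intros Hn; apply H; intros v Xv Hv; apply Hn; eauto.
  - intros [v [Xv Hv]] H; exact (H v Xv Hv).
Qed.

Lemma sat_bigAnd l w X : sat V (bigAnd l) w X <-> forall f, In f l -> sat V f w X.
Proof.
  induction l as [|a l IH].
  - split; [intros _ f [] | intros _; apply sat_FTop].
  - change (bigAnd (a :: l)) with (FAnd a (bigAnd l)); cbn [sat In].
    rewrite IH; firstorder congruence.
Qed.

Lemma sat_bigAnd_map {A} (f : A -> formula) l w X :
  sat V (bigAnd (map f l)) w X <-> forall x, In x l -> sat V (f x) w X.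
Proof.
  rewrite sat_bigAnd; split.
  - intros H x Hx; apply H, in_map, Hx.
  - intros H g Hg; apply in_map_iff in Hg as [x [<- Hx]]; auto.
Qed.

Lemma sat_bigOr_map {A} (f : A -> formula) l w X :
  sat V (bigOr (map f l)) w X <-> exists x, In x l /\ sat V (f x) w X.
Proof.
  induction l as [|a l IH].
  - unfold FBot; simpl; firstorder.
  - change (bigOr (map f (a :: l))) with (FOr (f a) (bigOr (map f l))).
    rewrite sat_FOr, IH; cbn [In]; firstorder congruence.
Qed.

Lemma sat_nonmodal f w X Y : nonmodal f -> sat V f w X <-> sat V f w Y.
Proof. induction f; simpl; tauto. Qed.

Lemma sat_state_ext f w X Y : (forall y, X y <-> Y y) -> sat V f w X <-> sat V f w Y.
Proof.
  intros HXY; revert w; induction f; intros w; simpl.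
  - reflexivity.
  - rewrite IHf; reflexivity.
  - rewrite IHf1, IHf2; reflexivity.
  - split; intros H v Hv; apply IHf, H, HXY, Hv.
  - assert (Hsub : forall Z, subset Z X <-> subset Z Y) by (unfold subset; firstorder).
    setoid_rewrite Hsub; reflexivity.
Qed.

Lemma peval_sat w X f :
  peval (fun g => if excluded_middle_informative (sat V g w X) then true else false) f = true
  <-> sat V f w X.
Proof.
  induction f; simpl;
    try (destruct excluded_middle_informative; split; congruence || tauto).
  - rewrite negb_true_iff, <- IHf; destruct peval; split; congruence.
  - rewrite andb_true_iff, IHf1, IHf2; reflexivity.
Qed.

Lemma K45prov_sound f : K45prov f -> forall w X, sat V f w X.
Proof.
  induction 1; intros w X.
  - apply peval_sat; auto.
  - rewrite !sat_FTo; intros Hab Ha v Xv.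
    specialize (Hab v Xv); rewrite sat_FTo in Hab; auto.
  - rewrite sat_FTo; simpl; auto.
  - rewrite sat_FTo; simpl; auto.
  - specialize (IHK45prov1 w X); rewrite sat_FTo in IHK45prov1; auto.
  - simpl; auto.
Qed.

Definition accepts (a : formula) (Y : W -> Prop) : Prop := forall v, Y v -> sat V a v Y.

(* Clauses (i)-(iii) of the semantics of [=>], with (iii) put positively. *)
Definition max_accepting (a : formula) (X X' : W -> Prop) : Prop :=
  subset X' X /\ accepts a X' /\
  forall X'', subset X'' X -> accepts a X'' -> subset X' X'' -> subset X'' X'.

Lemma sat_FImp a b w X :
  sat V (FImp a b) w X <-> forall X', max_accepting a X X' -> accepts b X'.
Proof.
  simpl; split.
  - intros H X' [sub [acc max]] v Xv; apply H; auto.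
    intros [X'' [sub'' [acc'' [incl [u [Hu nHu]]]]]]; apply nHu, (max X''); auto.
  - intros H X' sub acc nbig; apply H; repeat split; auto.
    intros X'' sub'' acc'' incl v Hv; apply NNPP; intros nHv.
    apply nbig; exists X''; repeat split; eauto.
Qed.

Lemma sat_FImp_equiv a a' b b' w X :
  (forall v Y, sat V a v Y <-> sat V a' v Y) -> (forall v Y, sat V b v Y <-> sat V b' v Y) ->
  sat V (FImp a b) w X <-> sat V (FImp a' b') w X.
Proof. intros Ha Hb; simpl; setoid_rewrite Ha; setoid_rewrite Hb; reflexivity. Qed.

Lemma accepts_state_ext a Y Z : (forall y, Y y <-> Z y) -> accepts a Y <-> accepts a Z.
Proof.
  intros HYZ; unfold accepts; split; intros H v Hv;
    apply (sat_state_ext _ _ _ _ HYZ), H, HYZ, Hv.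
Qed.

Definition restrict (X : W -> Prop) (phi : formula) : W -> Prop :=
  fun y => X y /\ sat V phi y X.

Lemma sat_box_FTo phi f w X :
  sat V (FBox (FTo phi f)) w X <-> forall v, restrict X phi v -> sat V f v X.
Proof. simpl; setoid_rewrite sat_FTo; unfold restrict; firstorder. Qed.

Lemma sat_box_restrict phi b w X : nonmodal phi -> nonmodal b ->
  sat V (FBox (FTo phi b)) w X <-> accepts b (restrict X phi).
Proof.
  intros Hphi Hb; rewrite sat_box_FTo; unfold accepts.
  setoid_rewrite (sat_nonmodal b _ X (restrict X phi) Hb); reflexivity.
Qed.

Lemma sat_dia_restrict phi c w X : nonmodal c ->
  sat V (FDia (FAnd phi c)) w X <-> exists y, restrict X phi y /\ sat V c y (restrict X phi).
Proof.
  intros Hc; rewrite sat_FDia; unfold restrict; simpl.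
  setoid_rewrite (sat_nonmodal c _ (fun y => X y /\ sat V phi y X) X Hc); firstorder.
Qed.

End Semantics.

Lemma powerset_incl {A} (l K : list A) : In K (powerset l) -> incl K l.
Proof.
  revert K; induction l as [|a l IH]; simpl; intros K HK.
  - destruct HK as [<- | []]; apply incl_nil_l.
  - apply in_app_or in HK as [HK | HK].
    + apply in_map_iff in HK as [K' [<- HK']]; apply incl_cons; [left; reflexivity|].
      apply incl_tl, IH, HK'.
    + apply incl_tl, IH, HK.
Qed.

Lemma powerset_filter {A} (l : list A) (P : A -> Prop) :
  exists K, In K (powerset l) /\ forall x, In x K <-> In x l /\ P x.
Proof.
  induction l as [|a l [K [HK HP]]]; simpl.
  - exists []; simpl; tauto.
  - destruct (classic (P a)).
    + exists (a :: K); split; [apply in_or_app; left; apply in_map, HK|].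
      intros x; simpl; rewrite HP; firstorder congruence.
    + exists K; split; [apply in_or_app; right; exact HK|].
      intros x; rewrite HP; firstorder congruence.
Qed.

Lemma powerset2_partition {A} (l : list A) SC : In SC (powerset2 l) ->
  forall x, In x l <-> In x (fst SC) \/ In x (snd SC).
Proof.
  revert SC; induction l as [|a l IH]; simpl; intros SC HSC x.
  - destruct HSC as [<- | []]; simpl; tauto.
  - apply in_app_or in HSC as [HSC | HSC]; apply in_map_iff in HSC as [sc [<- Hsc]];
      simpl; rewrite (IH sc Hsc x); tauto.
Qed.

Lemma powerset2_split {A} (l : list A) (P : A -> Prop) :
  exists SC, In SC (powerset2 l) /\
    (forall x, In x (fst SC) -> P x) /\ (forall x, In x (snd SC) -> ~ P x).
Proof.
  induction l as [|a l [[S C] [HSC [HS HC]]]]; simpl.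
  - exists ([], []); simpl; tauto.
  - destruct (classic (P a)).
    + exists (a :: S, C); split; [apply in_or_app; left; apply in_map_iff; exists (S, C); auto|].
      simpl in *; firstorder congruence.
    + exists (S, a :: C); split; [apply in_or_app; right; apply in_map_iff; exists (S, C); auto|].
      simpl in *; firstorder congruence.
Qed.

Lemma powerset2_cases {A} (l : list A) (p P : A -> Prop) :
  (forall SC, In SC (powerset2 l) ->
     (forall s, In s (fst SC) -> p s) -> (forall s, In s (snd SC) -> ~ p s) ->
     exists s, In s (fst SC) /\ P s)
  <-> exists s, In s l /\ p s /\ P s.
Proof.
  split.
  - intros H; destruct (powerset2_split l p) as [SC [HSC [Hp Hnp]]].
    destruct (H SC HSC Hp Hnp) as [s [Hs HPs]]; exists s.
    rewrite (powerset2_partition l SC HSC); auto.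
  - intros [s [Hs [Hps HPs]]] SC HSC Hp Hnp; exists s; split; auto.
    rewrite (powerset2_partition l SC HSC) in Hs; destruct Hs as [Hs | Hs]; auto.
    exfalso; exact (Hnp s Hs Hps).
Qed.

Lemma nonmodal_imp_free f : nonmodal f -> imp_free f.
Proof. induction f; simpl; tauto. Qed.

Lemma nonmodal_bigAnd l : Forall nonmodal l -> nonmodal (bigAnd l).
Proof. induction 1; [unfold FTop, FBot; simpl; tauto | split; auto]. Qed.

Lemma nonmodal_bigOr l : Forall nonmodal l -> nonmodal (bigOr l).
Proof. induction 1; [unfold FBot; simpl; tauto | split; auto]. Qed.

Lemma imp_free_bigAnd l : Forall imp_free l -> imp_free (bigAnd l).
Proof. induction 1; [unfold FTop, FBot; simpl; tauto | split; auto]. Qed.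

Lemma imp_free_bigOr l : Forall imp_free l -> imp_free (bigOr l).
Proof. induction 1; [unfold FBot; simpl; tauto | split; auto]. Qed.

Definition nonmodal_disjunct (d : disjunct) : Prop :=
  nonmodal (d_pi d) /\ nonmodal (d_beta d) /\ Forall nonmodal (d_dias d).

Lemma dnf_ok_nonmodal n : dnf_ok n -> Forall nonmodal_disjunct n.
Proof. apply Forall_impl; intros [[p b] ds]; auto. Qed.

Lemma nonmodal_disjunct_powerset Theta K :
  Forall nonmodal_disjunct Theta -> In K (powerset Theta) -> Forall nonmodal_disjunct K.
Proof. intros HTheta HK; exact (incl_Forall (powerset_incl Theta K HK) HTheta). Qed.

Lemma nonmodal_disjunct_powerset2 Omega SC :
  Forall nonmodal_disjunct Omega -> In SC (powerset2 Omega) ->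
  Forall nonmodal_disjunct (fst SC) /\ Forall nonmodal_disjunct (snd SC).
Proof.
  intros HOmega HSC; split; apply (incl_Forall (l1 := Omega)); auto;
    intros s Hs; apply (powerset2_partition _ _ HSC); auto.
Qed.

Lemma nonmodal_info K : Forall nonmodal_disjunct K -> nonmodal (info K).
Proof.
  intros HK; split; [apply nonmodal_bigOr | apply nonmodal_bigAnd]; apply Forall_map;
    eapply Forall_impl; try exact HK; intros d Hd; apply Hd.
Qed.

Lemma nonmodal_state SC :
  Forall nonmodal_disjunct (fst SC) -> Forall nonmodal_disjunct (snd SC) -> nonmodal (state SC).
Proof.
  intros HS HC; split; apply nonmodal_bigAnd, Forall_map;
    [eapply Forall_impl; [|exact HS] | eapply Forall_impl; [|exact HC]]; intros d Hd; apply Hd.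
Qed.

Lemma imp_free_good K : Forall nonmodal_disjunct K -> imp_free (good K).
Proof.
  intros HK; pose proof (nonmodal_imp_free _ (nonmodal_info K HK)).
  apply imp_free_bigAnd, Forall_flat_map; eapply Forall_impl; [|exact HK].
  intros k [_ [_ Hc]]; apply Forall_map; eapply Forall_impl; [|exact Hc].
  intros c Hc'; split; auto using nonmodal_imp_free.
Qed.

Lemma imp_free_maxK Theta K :
  Forall nonmodal_disjunct Theta -> In K (powerset Theta) -> imp_free (maxK Theta K).
Proof.
  intros HTheta HK; pose proof (nonmodal_disjunct_powerset _ _ HTheta HK) as HK'.
  split; [apply imp_free_good, HK'|].
  apply imp_free_bigAnd, Forall_map, Forall_forall; intros L HL.
  pose proof (nonmodal_disjunct_powerset _ _ HTheta HL) as HL'.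
  pose proof (nonmodal_imp_free _ (nonmodal_info K HK')).
  pose proof (nonmodal_imp_free _ (nonmodal_info L HL')).
  pose proof (imp_free_good L HL').
  unfold FTo, FDia; cbn [imp_free]; tauto.
Qed.

Definition relativized_modal_part (phi : formula) (s : disjunct) : formula :=
  FAnd (FBox (FTo phi (d_beta s))) (bigAnd (map (fun g => FDia (FAnd phi g)) (d_dias s))).

Definition relativized_dnf (phi : formula) (Omega : dnf) : formula :=
  bigAnd (map (fun SC => FTo (state SC) (bigOr (map (relativized_modal_part phi) (fst SC))))
              (powerset2 Omega)).

Lemma star_relativized Theta Omega :
  star Theta Omega =
  bigAnd (map (fun K => FTo (maxK Theta K) (FBox (FTo (info K) (relativized_dnf (info K) Omega))))
              (powerset Theta)).
Proof. reflexivity. Qed.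

Lemma imp_free_relativized_dnf phi Omega :
  imp_free phi -> Forall nonmodal_disjunct Omega -> imp_free (relativized_dnf phi Omega).
Proof.
  intros Hphi HOmega; apply imp_free_bigAnd, Forall_map, Forall_forall; intros SC HSC.
  destruct (nonmodal_disjunct_powerset2 _ _ HOmega HSC) as [HS HC].
  pose proof (nonmodal_imp_free _ (nonmodal_state SC HS HC)).
  assert (imp_free (bigOr (map (relativized_modal_part phi) (fst SC)))).
  { apply imp_free_bigOr, Forall_map; eapply Forall_impl; [|exact HS].
    intros s [_ [Hb Hc]]; split; [split; auto using nonmodal_imp_free|].
    apply imp_free_bigAnd, Forall_map; eapply Forall_impl; [|exact Hc].
    intros c Hc'; split; auto using nonmodal_imp_free. }
  unfold FTo; cbn [imp_free]; tauto.
Qed.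

Lemma imp_free_star Theta Omega :
  Forall nonmodal_disjunct Theta -> Forall nonmodal_disjunct Omega -> imp_free (star Theta Omega).
Proof.
  intros HTheta HOmega; rewrite star_relativized.
  apply imp_free_bigAnd, Forall_map, Forall_forall; intros K HK.
  pose proof (nonmodal_imp_free _ (nonmodal_info K (nonmodal_disjunct_powerset _ _ HTheta HK)))
    as HiK.
  pose proof (imp_free_maxK Theta K HTheta HK).
  pose proof (imp_free_relativized_dnf (info K) Omega HiK HOmega).
  unfold FTo; cbn [imp_free]; tauto.
Qed.

Section DNFSemantics.

Context {W : Type} (V : nat -> W -> Prop).

Definition dias_realized (Y : W -> Prop) (d : disjunct) : Prop :=
  forall c, In c (d_dias d) -> exists y, Y y /\ sat V c y Y.

Definition modal_part_holds (Y : W -> Prop) (d : disjunct) : Prop :=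
  accepts V (d_beta d) Y /\ dias_realized Y d.

Lemma sat_disjunct d v Y :
  sat V (disjunct_formula d) v Y <-> sat V (d_pi d) v Y /\ modal_part_holds Y d.
Proof.
  destruct d as [[p b] ds]; unfold disjunct_formula, modal_part_holds, dias_realized.
  rewrite !sat_FAnd, sat_bigAnd_map; setoid_rewrite sat_FDia; reflexivity.
Qed.

Lemma sat_dnf n v Y :
  sat V (dnf_formula n) v Y <-> exists d, In d n /\ sat V (d_pi d) v Y /\ modal_part_holds Y d.
Proof. unfold dnf_formula; rewrite sat_bigOr_map; setoid_rewrite sat_disjunct; reflexivity. Qed.

Lemma dias_realized_mono d Y Z : Forall nonmodal (d_dias d) -> subset Y Z ->
  dias_realized Y d -> dias_realized Z d.
Proof.
  intros Hd sub H c Hc; destruct (H c Hc) as [y [Yy Hy]]; exists y; split; auto.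
  rewrite (sat_nonmodal V c y Z Y); auto; rewrite Forall_forall in Hd; auto.
Qed.

Lemma sat_info K y Y : sat V (info K) y Y <->
  (exists d, In d K /\ sat V (d_pi d) y Y) /\ (forall d, In d K -> sat V (d_beta d) y Y).
Proof. unfold info; rewrite sat_FAnd, sat_bigOr_map, sat_bigAnd_map; reflexivity. Qed.

Lemma accepts_beta_restrict_info K k X : Forall nonmodal_disjunct K -> In k K ->
  accepts V (d_beta k) (restrict V X (info K)).
Proof.
  intros HK Hk v [Xv Hv]; rewrite Forall_forall in HK; destruct (HK k Hk) as [_ [Hb _]].
  rewrite (sat_nonmodal V _ v _ X Hb); rewrite sat_info in Hv; apply Hv, Hk.
Qed.

Lemma sat_good K w X : Forall nonmodal_disjunct K ->
  sat V (good K) w X <-> forall k, In k K -> dias_realized (restrict V X (info K)) k.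
Proof.
  intros HK; rewrite Forall_forall in HK; unfold good; rewrite sat_bigAnd; split.
  - intros H k Hk c Hc; destruct (HK k Hk) as [_ [_ Hnc]]; rewrite Forall_forall in Hnc.
    apply sat_dia_restrict with (w := w); auto.
    apply H, in_flat_map; exists k; split; auto; apply in_map_iff; eauto.
  - intros H f Hf; apply in_flat_map in Hf as [k [Hk Hf]]; apply in_map_iff in Hf as [c [<- Hc]].
    destruct (HK k Hk) as [_ [_ Hnc]]; rewrite Forall_forall in Hnc.
    apply sat_dia_restrict; auto; apply (H k); auto.
Qed.

Lemma sat_maxK Theta K w X : sat V (maxK Theta K) w X <->
  sat V (good K) w X /\
  forall L, In L (powerset Theta) ->
    subset (restrict V X (info K)) (restrict V X (info L)) ->
    (exists y, restrict V X (info L) y /\ ~ restrict V X (info K) y) ->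
    ~ sat V (good L) w X.
Proof.
  unfold maxK; rewrite sat_FAnd, sat_bigAnd_map; setoid_rewrite sat_FTo.
  setoid_rewrite sat_FAnd; setoid_rewrite sat_FDia; cbn [sat]; setoid_rewrite sat_FTo.
  unfold subset, restrict; firstorder.
Qed.

Lemma sat_state SC v X : sat V (state SC) v X <->
  (forall s, In s (fst SC) -> sat V (d_pi s) v X) /\
  (forall s, In s (snd SC) -> ~ sat V (d_pi s) v X).
Proof. unfold state; rewrite sat_FAnd, !sat_bigAnd_map; reflexivity. Qed.

Lemma sat_relativized_modal_part phi s v X : nonmodal phi -> nonmodal_disjunct s ->
  sat V (relativized_modal_part phi s) v X <-> modal_part_holds (restrict V X phi) s.
Proof.
  intros Hphi [_ [Hb Hc]]; rewrite Forall_forall in Hc.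
  unfold relativized_modal_part, modal_part_holds, dias_realized.
  rewrite sat_FAnd, sat_box_restrict, sat_bigAnd_map by assumption.
  apply and_iff_compat_l; split; intros H c Hcs; specialize (H c Hcs);
    rewrite sat_dia_restrict in *; auto.
Qed.

Lemma sat_relativized_dnf phi Omega : nonmodal phi -> Forall nonmodal_disjunct Omega ->
  forall v X,
    sat V (relativized_dnf phi Omega) v X <-> sat V (dnf_formula Omega) v (restrict V X phi).
Proof.
  intros Hphi HOmega v X; rewrite Forall_forall in HOmega.
  unfold relativized_dnf; rewrite sat_bigAnd_map, sat_dnf.
  transitivity
    (exists s, In s Omega /\ sat V (d_pi s) v X /\ modal_part_holds (restrict V X phi) s).
  - rewrite <- powerset2_cases.
    split; intros H SC HSC; specialize (H SC HSC); rewrite sat_FTo, sat_state, sat_bigOr_map in *;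
      assert (HSC' : forall s, In s (fst SC) -> In s Omega)
        by (intros s Hs; apply (powerset2_partition _ _ HSC); auto).
    + intros Hp Hnp; destruct (H (conj Hp Hnp)) as [s [Hs Hm]]; exists s; split; auto.
      rewrite <- (sat_relativized_modal_part phi s v X); auto.
    + intros [Hp Hnp]; destruct (H Hp Hnp) as [s [Hs Hm]]; exists s; split; auto.
      rewrite sat_relativized_modal_part; auto.
  - split; intros [s [Hs [Hp Hm]]]; exists s; split; auto; split; auto;
      destruct (HOmega s Hs) as [Hpi _].
    + exact (proj1 (sat_nonmodal V _ v X _ Hpi) Hp).
    + exact (proj2 (sat_nonmodal V _ v X _ Hpi) Hp).
Qed.

Lemma sat_box_relativized_dnf phi Omega w X :
  nonmodal phi -> Forall nonmodal_disjunct Omega ->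
  sat V (FBox (FTo phi (relativized_dnf phi Omega))) w X <->
  accepts V (dnf_formula Omega) (restrict V X phi).
Proof.
  intros Hphi HOmega; rewrite sat_box_FTo.
  setoid_rewrite (sat_relativized_dnf phi Omega Hphi HOmega); reflexivity.
Qed.

End DNFSemantics.

Section MaximalAcceptingStates.

Context {W : Type} (V : nat -> W -> Prop) (Theta : dnf).
Hypothesis HTheta : Forall nonmodal_disjunct Theta.

Lemma accepts_dnf_sub_restrict w X Y : subset Y X -> accepts V (dnf_formula Theta) Y ->
  exists K, In K (powerset Theta) /\ subset Y (restrict V X (info K)) /\ sat V (good K) w X.
Proof.
  intros sub acc; destruct (powerset_filter Theta (modal_part_holds V Y)) as [K [HK HKdef]].
  pose proof (nonmodal_disjunct_powerset _ _ HTheta HK) as HK'.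
  assert (YK : subset Y (restrict V X (info K))).
  { intros v Yv; split; auto.
    rewrite (sat_nonmodal V _ v X Y (nonmodal_info K HK')), sat_info; split.
    - destruct (proj1 (sat_dnf V Theta v Y) (acc v Yv)) as [d [Hd [Hpi Hm]]].
      exists d; split; auto; apply HKdef; auto.
    - intros d Hd; apply HKdef in Hd as [_ [Hb _]]; apply Hb, Yv. }
  exists K; split; [exact HK | split; [exact YK |]].
  rewrite sat_good by exact HK'; intros k Hk; apply HKdef in Hk as [Hk [_ Hdias]].
  rewrite Forall_forall in HTheta; destruct (HTheta k Hk) as [_ [_ Hc]].
  exact (dias_realized_mono V k Y _ Hc YK Hdias).
Qed.

Lemma restrict_accepts_dnf w X L : In L (powerset Theta) -> sat V (good L) w X ->
  accepts V (dnf_formula Theta) (restrict V X (info L)).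
Proof.
  intros HL gL u Ru; pose proof (nonmodal_disjunct_powerset _ _ HTheta HL) as HL'.
  rewrite sat_good in gL by exact HL'.
  destruct Ru as [Xu Hu]; pose proof Hu as Hu'; rewrite sat_info in Hu'.
  destruct Hu' as [[d [Hd Hpi]] _]; rewrite sat_dnf; exists d.
  split; [apply (powerset_incl _ _ HL), Hd|].
  destruct (proj1 (Forall_forall _ _) HL' d Hd) as [Np _].
  split; [exact (proj1 (sat_nonmodal V _ u X _ Np) Hpi)|].
  split; [apply accepts_beta_restrict_info | apply gL]; auto.
Qed.

Lemma maxK_max_accepting w X K : In K (powerset Theta) -> sat V (maxK Theta K) w X ->
  max_accepting V (dnf_formula Theta) X (restrict V X (info K)).
Proof.
  intros HK HM; rewrite sat_maxK in HM; destruct HM as [gK maxL].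
  split; [intros y [Xy _]; exact Xy|]; split; [apply restrict_accepts_dnf with w; auto|].
  intros X'' sub acc incl u Hu; apply NNPP; intros nRu.
  destruct (accepts_dnf_sub_restrict w X X'' sub acc) as [L [HL [subL gL]]].
  apply (maxL L HL); auto.
  - intros y Hy; apply subL, incl, Hy.
  - exists u; auto.
Qed.

Lemma max_accepting_maxK w X X' : max_accepting V (dnf_formula Theta) X X' ->
  exists K, In K (powerset Theta) /\ sat V (maxK Theta K) w X /\
    forall y, X' y <-> restrict V X (info K) y.
Proof.
  intros [sub [acc max]].
  destruct (accepts_dnf_sub_restrict w X X' sub acc) as [K [HK [subK gK]]].
  assert (Ksub : subset (restrict V X (info K)) X').
  { apply max; auto; [intros y [Xy _]; exact Xy | apply restrict_accepts_dnf with w; auto]. }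
  exists K; split; auto; split; [|split; auto].
  rewrite sat_maxK; split; auto.
  intros L HL incl [u [RLu nRKu]] gL.
  assert (Lsub : subset (restrict V X (info L)) X').
  { apply max; [intros y [Xy _]; exact Xy | apply restrict_accepts_dnf with w; auto |].
    intros y Hy; apply incl, subK, Hy. }
  apply nRKu, subK, Lsub, RLu.
Qed.

Lemma sat_FImp_dnf b w X : sat V (FImp (dnf_formula Theta) b) w X <->
  forall K, In K (powerset Theta) -> sat V (maxK Theta K) w X ->
    accepts V b (restrict V X (info K)).
Proof.
  rewrite sat_FImp; split.
  - intros H K HK HM; apply H, maxK_max_accepting with w; auto.
  - intros H X' HX'; destruct (max_accepting_maxK w X X' HX') as [K [HK [HM Heq]]].
    rewrite (accepts_state_ext V b _ _ Heq); auto.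
Qed.

End MaximalAcceptingStates.

Lemma sat_star {W} (V : nat -> W -> Prop) Theta Omega w X :
  Forall nonmodal_disjunct Theta -> Forall nonmodal_disjunct Omega ->
  sat V (star Theta Omega) w X <->
  forall K, In K (powerset Theta) -> sat V (maxK Theta K) w X ->
    accepts V (dnf_formula Omega) (restrict V X (info K)).
Proof.
  intros HTheta HOmega; rewrite star_relativized, sat_bigAnd_map.
  split; intros H K HK; specialize (H K HK); rewrite sat_FTo in *;
    rewrite sat_box_relativized_dnf in *
      by eauto using nonmodal_info, nonmodal_disjunct_powerset;
    exact H.
Qed.

Lemma sat_FImp_dnf_star {W} (V : nat -> W -> Prop) Theta Omega w X :
  Forall nonmodal_disjunct Theta -> Forall nonmodal_disjunct Omega ->
  sat V (FImp (dnf_formula Theta) (dnf_formula Omega)) w X <-> sat V (star Theta Omega) w X.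
Proof. intros HTheta HOmega; rewrite sat_FImp_dnf, sat_star by assumption; reflexivity. Qed.

Theorem theorem12 (NF : formula -> dnf) (HNF : NF_spec NF) (delta : formula) :
  imp_free (dagger NF delta) /\
  (forall (W : Type) (V : nat -> W -> Prop) (w : W) (X : W -> Prop),
      sat V delta w X <-> sat V (dagger NF delta) w X).
Proof.
  induction delta as [p | a [Ia Sa] | a [Ia Sa] b [Ib Sb] | a [Ia Sa] | a [Ia Sa] b [Ib Sb]];
    simpl.
  - split; [exact I | reflexivity].
  - split; [exact Ia |]; intros W V w X; rewrite Sa; reflexivity.
  - split; [split; assumption |]; intros W V w X; rewrite Sa, Sb; reflexivity.
  - split; [exact Ia |]; intros W V w X; setoid_rewrite Sa; reflexivity.
  - destruct (HNF _ Ia) as [okA eqA], (HNF _ Ib) as [okB eqB].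
    apply dnf_ok_nonmodal in okA, okB.
    split; [apply imp_free_star; assumption |]; intros W V w X.
    rewrite <- sat_FImp_dnf_star by assumption.
    apply sat_FImp_equiv; intros v Y; [rewrite Sa | rewrite Sb];
      apply sat_FIff, K45prov_sound; assumption.
Qed.
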